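(* For the matching model described in the context, provided the normalising sum is finite, the stationary distribution of the token state descriptor is $$\pi((T_1,n_1,\dots,T_i,n_i))=\pi((0))\prod_{j=1}^i\frac{\lambda_{T_j}}{A(j)\sum_{m=1}^j\lambda_{T_m}}\Big(\frac{\sum_{m=1}^j\lambda_{T_m}}{F_j(T_1,\dots,T_j)}\Big)^{n_j+1}\prod_{m=1}^{\sum_{l=1}^i n_l}\frac1{A(i+m)},$$ for all $i$, distinct $T_1,\dots,T_i$ and $n_j\in\mathbb N_0$, with $\pi((0))$ the normalising constant.
   Context: Parallel FCFS matching model: customer types $c_1,\dots,c_K$, type $c_l$ arriving as an independent Poisson process with rate $\lambda_{t_l}>0$; a finite set of server types, each compatible with some customer types. When $n$ customers are waiting, servers of each server type arrive (independently) at rate $A(n)>0$ ($n\ge1$). An arriving server is matched with the longest-waiting compatible customer, and both leave; if none, the server leaves immediately. Token representation: token $t_l$ corresponds to type $c_l$ and is held by the oldest type-$c_l$ customer waiting. State: $(0)$ or $(T_1,n_1,\dots,T_i,n_i)$ with $T_1,\dots,T_i$ the distinct held tokens ordered by arrival of their holders and $n_j$ the number of non-holding customers arriving between holders of $T_j$ and $T_{j+1}$ (after the holder of $T_i$ for $j=i$). $F_j(T_1,\dots,T_j)$ denotes the number of server types compatible with at least one of the customer types corresponding to $T_1,\dots,T_j$, assumed positive for nonempty tuples. *)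

From Stdlib Require Import Reals List Arith Bool.
Import ListNotations.
Open Scope R_scope.

(* ---------- Conventions ----------
   Customer types c_0,...,c_{K-1} are the naturals < K (token t_l <-> type l).
   Server types are the naturals < S; [compat s c] says server type s can
   serve customer type c.
   lam c = arrival rate of type c;  A n = arrival rate of each server type
   when n customers are waiting. *)

Definition sumR (l : list R) : R := fold_right Rplus 0 l.
Definition prodR (l : list R) : R := fold_right Rmult 1 l.

(* Detailed state: the sequence of types of the waiting customers, in order
   of arrival (oldest first). [states K n] lists all such states with n
   customers. *)
Fixpoint states (K n : nat) : list (list nat) :=
  match n with
  | O => [[]]
  | S m => flat_map (fun x => map (fun c => x ++ [c]) (seq 0 K)) (states K m)
  end.

Definition valid_state (K : nat) (x : list nat) : Prop :=
  Forall (fun c => (c < K)%nat) x.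

Fixpoint rem_first (p : nat -> bool) (x : list nat) : list nat :=
  match x with
  | [] => []
  | c :: x' => if p c then x' else c :: rem_first p x'
  end.

(* Transition rate q(x,y) of the FCFS matching CTMC on detailed states:
   - arrival of a type-c customer (rate lam c) appends c;
   - arrival of a type-s server (rate A (length x)) removes the longest
     waiting compatible customer, if any (otherwise the server leaves). *)
Definition rate (K nS : nat) (lam A : nat -> R) (compat : nat -> nat -> bool)
  (x y : list nat) : R :=
  sumR (map (fun c => if list_eq_dec Nat.eq_dec y (x ++ [c]) then lam c else 0)
            (seq 0 K))
  + sumR (map (fun s =>
        if existsb (compat s) x then
          (if list_eq_dec Nat.eq_dec y (rem_first (compat s) x)
           then A (length x) else 0)
        else 0) (seq 0 nS)).

(* all states that can be reached from / lead to x in one jump *)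
Definition nbrs (K : nat) (x : list nat) : list (list nat) :=
  states K (S (length x)) ++
  match length x with O => [] | S m => states K m end.

Definition stationary (K nS : nat) (lam A : nat -> R)
  (compat : nat -> nat -> bool) (pi : list nat -> R) : Prop :=
  (forall x, valid_state K x -> 0 <= pi x) /\
  infinite_sum (fun N => sumR (map pi (states K N))) 1 /\
  (forall x, valid_state K x ->
     pi x * sumR (map (rate K nS lam A compat x) (nbrs K x)) =
     sumR (map (fun y => pi y * rate K nS lam A compat y x) (nbrs K x))).

(* ---------- Token state descriptor ----------
   (0) is [], and (T_1,n_1,...,T_i,n_i) is [(T_1,n_1);...;(T_i,n_i)]. *)
Fixpoint incr_last (l : list (nat * nat)) : list (nat * nat) :=
  match l with
  | [] => []
  | p :: [] => [(fst p, S (snd p))]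
  | p :: l' => p :: incr_last l'
  end.

Definition token_step (st : list (nat * nat)) (c : nat) : list (nat * nat) :=
  if existsb (fun p => Nat.eqb (fst p) c) st then incr_last st
  else st ++ [(c, 0%nat)].

Definition token_state (x : list nat) : list (nat * nat) :=
  fold_left token_step x [].

Definition pair_dec : forall p q : nat * nat, {p = q} + {p <> q}.
Proof. decide equality; apply Nat.eq_dec. Defined.

Definition tok_dec := list_eq_dec pair_dec.

(* number of customers in a token state: i + sum n_j *)
Definition tsize (ts : list (nat * nat)) : nat :=
  (length ts + fold_right plus 0%nat (map snd ts))%nat.

Definition valid_token (K : nat) (ts : list (nat * nat)) : Prop :=
  NoDup (map fst ts) /\ Forall (fun T => (T < K)%nat) (map fst ts).

Definition tstates (K N : nat) : list (list (nat * nat)) :=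
  nodup tok_dec (map token_state (states K N)).

Definition token_marginal (K : nat) (pi : list nat -> R)
  (ts : list (nat * nat)) : R :=
  sumR (map (fun x => if tok_dec (token_state x) ts then pi x else 0)
            (states K (tsize ts))).

Definition LamP (lam : nat -> R) (P : list (nat * nat)) : R :=
  sumR (map (fun p => lam (fst p)) P).

Definition Fcount (nS : nat) (compat : nat -> nat -> bool)
  (P : list (nat * nat)) : nat :=
  length (filter (fun s => existsb (fun p => compat s (fst p)) P) (seq 0 nS)).

Definition weight (nS : nat) (lam A : nat -> R) (compat : nat -> nat -> bool)
  (ts : list (nat * nat)) : R :=
  prodR (map (fun j =>
      let P := firstn j ts in
      let Tj := fst (nth (j - 1) ts (0%nat, 0%nat)) in
      let nj := snd (nth (j - 1) ts (0%nat, 0%nat)) in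
      lam Tj / (A j * LamP lam P) *
      (LamP lam P / INR (Fcount nS compat P)) ^ (S nj))
    (seq 1 (length ts)))
  * prodR (map (fun m => / A (length ts + m)%nat)
               (seq 1 (fold_right plus 0%nat (map snd ts)))).

From Stdlib Require Import Reals List Arith Bool Lra Lia FinFun.
Import ListNotations.
Open Scope R_scope.

(* We work with the detailed chain whose state is the sequence of the types of
   the waiting customers, oldest first.
   1. Product form.  mu x = prod_k lam(x_k) / (A k * F(x_1 .. x_k)), where F p is
      the number of server types compatible with some customer of p, solves the
      global balance equations.  The inflow into x caused by server arrivals is
      computed by induction on x (removing the oldest compatible customer undoes
      an insertion), and collapses thanks to the exchange identity
      mu(p c d z) F(p c) = mu(p d c z) F(p d).
   2. Uniqueness.  For a stationary pi, h = pi / mu obeys a minimum principle: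
      h z <= h y whenever y jumps to z with positive rate.  Balance of pi and of
      mu makes the truncation min(h, h z) superharmonic; its defects, summed level
      by level, telescope and are killed by the summability of pi.  Paths of
      arrivals and services through the empty state then give pi = pi(0) mu.
   3. Lumping.  Summing mu over the detailed states with a given token
      descriptor yields the product-form weight of the theorem, by induction on
      the number of customers: the newest customer either creates a new token or
      joins the last block.
   Hence mu / Z is stationary, every stationary pi equals pi(0) mu with
   pi(0) Z = 1, and its token marginal is pi(0) times the weight. *)

Lemma sumR_app l1 l2 : sumR (l1 ++ l2) = sumR l1 + sumR l2.
Proof. induction l1 as [|a l1 IH]; simpl; [lra | rewrite IH; lra]. Qed.

Lemma sumR_ext {T} (f g : T -> R) l :
  (forall x, In x l -> f x = g x) -> sumR (map f l) = sumR (map g l).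
Proof. intros H; rewrite (map_ext_in f g l H); reflexivity. Qed.

Lemma sumR_plus {T} (f g : T -> R) l :
  sumR (map (fun x => f x + g x) l) = sumR (map f l) + sumR (map g l).
Proof. induction l as [|a l IH]; simpl; [lra | rewrite IH; lra]. Qed.

Lemma sumR_scal {T} (a : R) (f : T -> R) l :
  sumR (map (fun x => a * f x) l) = a * sumR (map f l).
Proof. induction l as [|b l IH]; simpl; [lra | rewrite IH; lra]. Qed.

Lemma sumR_scalr {T} (a : R) (f : T -> R) l :
  sumR (map (fun x => f x * a) l) = sumR (map f l) * a.
Proof. induction l as [|b l IH]; simpl; [lra | rewrite IH; lra]. Qed.

Lemma sumR_zero {T} (f : T -> R) l :
  (forall x, In x l -> f x = 0) -> sumR (map f l) = 0.
Proof.
  induction l as [|a l IH]; simpl; intros H; [lra|].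
  rewrite H, IH by auto. lra.
Qed.

Lemma sumR_nonneg {T} (f : T -> R) l :
  (forall x, In x l -> 0 <= f x) -> 0 <= sumR (map f l).
Proof.
  induction l as [|a l IH]; simpl; intros H; [lra|].
  assert (0 <= f a) by auto. assert (0 <= sumR (map f l)) by auto. lra.
Qed.

Lemma sumR_le {T} (f g : T -> R) l :
  (forall x, In x l -> f x <= g x) -> sumR (map f l) <= sumR (map g l).
Proof.
  induction l as [|a l IH]; simpl; intros H; [lra|].
  assert (f a <= g a) by auto. assert (sumR (map f l) <= sumR (map g l)) by auto. lra.
Qed.

Lemma sumR_swap {T U} (f : T -> U -> R) l1 l2 :
  sumR (map (fun x => sumR (map (fun y => f x y) l2)) l1) =
  sumR (map (fun y => sumR (map (fun x => f x y) l1)) l2).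
Proof.
  induction l1 as [|a l1 IH]; simpl.
  - symmetry; apply sumR_zero; auto.
  - rewrite IH, <- sumR_plus. reflexivity.
Qed.

Lemma sumR_flat_map {T U} (f : U -> R) (g : T -> list U) l :
  sumR (map f (flat_map g l)) = sumR (map (fun x => sumR (map f (g x))) l).
Proof. induction l as [|a l IH]; simpl; auto. rewrite map_app, sumR_app, IH. reflexivity. Qed.

Lemma sumR_single {T} (f : T -> R) l t :
  NoDup l -> In t l -> (forall y, In y l -> y <> t -> f y = 0) ->
  sumR (map f l) = f t.
Proof.
  induction l as [|a l IH]; simpl; intros Hnd Hin H; [contradiction|].
  inversion Hnd; subst. destruct Hin as [<-|Hin].
  - rewrite sumR_zero; [lra|]. intros y Hy. apply H; auto. intros ->; auto.
  - rewrite IH, H; auto; try lra; intros ->; auto.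
Qed.

Lemma sumR_all_zero {T} (f : T -> R) l :
  (forall x, In x l -> 0 <= f x) -> sumR (map f l) = 0 -> forall x, In x l -> f x = 0.
Proof.
  induction l as [|a l IH]; simpl; intros H Hs x Hx; [contradiction|].
  assert (0 <= sumR (map f l)) by (apply sumR_nonneg; auto).
  assert (0 <= f a) by auto.
  destruct Hx as [<-|Hx]; [lra|]. apply IH; auto. lra.
Qed.

Lemma sumR_pos {T} (f : T -> R) l t :
  (forall x, In x l -> 0 <= f x) -> In t l -> 0 < f t -> 0 < sumR (map f l).
Proof.
  intros H Hin Ht. assert (0 <= sumR (map f l)) by (apply sumR_nonneg; auto).
  destruct (Req_dec (sumR (map f l)) 0) as [Hz|]; [|lra].
  pose proof (sumR_all_zero f l H Hz t Hin). lra.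
Qed.

Lemma sumR_seq_indicator K d (f : nat -> R) :
  (d < K)%nat -> sumR (map (fun c => if Nat.eq_dec c d then f c else 0) (seq 0 K)) = f d.
Proof.
  intros Hd. rewrite (sumR_single _ _ d); [ | apply seq_NoDup | apply in_seq; lia | ].
  - destruct (Nat.eq_dec d d); congruence.
  - intros y _ Hy. destruct (Nat.eq_dec y d); congruence.
Qed.

Lemma sumR_indicator_count {T} (b : T -> bool) (a : R) l :
  sumR (map (fun s => if b s then a else 0) l) = INR (length (filter b l)) * a.
Proof.
  induction l as [|t l IH]; [simpl; lra|]. cbn [map filter sumR fold_right] in *.
  destruct (b t); cbn [length fold_right]; [rewrite S_INR|]; unfold sumR in IH; rewrite IH; ring.
Qed.

Lemma prodR_app l1 l2 : prodR (l1 ++ l2) = prodR l1 * prodR l2.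
Proof. induction l1 as [|a l1 IH]; simpl; [lra | rewrite IH; lra]. Qed.

Lemma infinite_sum_ext (a b : nat -> R) l :
  (forall n, a n = b n) -> infinite_sum a l -> infinite_sum b l.
Proof.
  intros H Ha eps He. destruct (Ha eps He) as [N HN]. exists N. intros n Hn.
  rewrite <- (sum_eq a b n) by auto. auto.
Qed.

Lemma infinite_sum_scal (a : nat -> R) l k :
  infinite_sum a l -> infinite_sum (fun n => k * a n) (k * l).
Proof.
  intros Ha eps He.
  destruct (Ha (eps / (Rabs k + 1))) as [N HN].
  { apply Rdiv_lt_0_compat; [lra|]. pose proof (Rabs_pos k). lra. }
  exists N. intros n Hn. specialize (HN n Hn). unfold Rdist in *.
  rewrite <- (sum_eq (fun i => a i * k)) by (intros; ring). rewrite <- scal_sum.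
  replace (k * sum_f_R0 a n - k * l) with (k * (sum_f_R0 a n - l)) by ring.
  rewrite Rabs_mult. pose proof (Rabs_pos k).
  apply (Rle_lt_trans _ (Rabs k * (eps / (Rabs k + 1)))).
  - apply Rmult_le_compat_l; lra.
  - apply (Rmult_lt_reg_r (Rabs k + 1)); [lra|]. field_simplify; [|lra]. nra.
Qed.

Lemma series_terms_small a l : infinite_sum a l ->
  forall eps, eps > 0 -> exists N, forall n, (n >= N)%nat -> Rabs (a n) < eps.
Proof.
  intros H eps He. destruct (H (eps / 2)) as [N HN]; [lra|].
  exists (S N). intros [|n] Hn; [lia|].
  assert (H1 := HN n ltac:(lia)). assert (H2 := HN (S n) ltac:(lia)).
  unfold Rdist in *. simpl in H2.
  replace (a (S n)) with ((sum_f_R0 a n + a (S n) - l) - (sum_f_R0 a n - l)) by ring.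
  eapply Rle_lt_trans; [apply Rabs_triang|]. rewrite Rabs_Ropp. lra.
Qed.

Lemma partial_sum_ge_term (D : nat -> R) : (forall N, 0 <= D N) ->
  forall n M, (n <= M)%nat -> D n <= sum_f_R0 D M.
Proof.
  intros Hp n M HM. induction M as [|M IH].
  - replace n with 0%nat by lia. simpl. lra.
  - simpl. pose proof (Hp (S M)). destruct (Nat.eq_dec n (S M)) as [->|Hne].
    + pose proof (cond_pos_sum D M Hp). lra.
    + assert (D n <= sum_f_R0 D M) by (apply IH; lia). lra.
Qed.

Definition prev_term (U : nat -> R) (N : nat) : R :=
  match N with O => 0 | S m => U m end.

Lemma telescoping_partial_sums (D U V : nat -> R) :
  (forall N, D N = U N + V N - prev_term U N - V (S N)) -> V 0%nat = 0 ->
  forall M, sum_f_R0 D M = U M - V (S M).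
Proof.
  intros HD H0 M. induction M as [|M IH]; simpl; rewrite HD; simpl; [lra|].
  rewrite IH. lra.
Qed.

Lemma dominated_by_series_terms_zero (D p : nat -> R) (L l : R) :
  0 <= L -> (forall N, 0 <= D N) -> (forall M, sum_f_R0 D M <= L * p M) ->
  infinite_sum p l -> forall n, D n = 0.
Proof.
  intros HL HD Hdom Hinf n.
  destruct (Rle_lt_dec (D n) 0) as [Hle|Hgt]; [specialize (HD n); lra|].
  destruct (series_terms_small p l Hinf (D n / (L + 1))) as [N HN].
  { apply Rdiv_lt_0_compat; lra. }
  set (M := Nat.max N n).
  assert (H1 := partial_sum_ge_term D HD n M ltac:(unfold M; lia)).
  specialize (Hdom M). specialize (HN M ltac:(unfold M; lia)).
  assert (Hp : L * p M <= L * (D n / (L + 1))).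
  { apply Rmult_le_compat_l; [lra|]. eapply Rle_trans; [apply Rle_abs | lra]. }
  assert (L * (D n / (L + 1)) < D n).
  { apply (Rmult_lt_reg_r (L + 1)); [lra|]. field_simplify; [|lra]. nra. }
  lra.
Qed.

Lemma valid_app K x y : valid_state K (x ++ y) <-> valid_state K x /\ valid_state K y.
Proof. unfold valid_state. rewrite Forall_app. tauto. Qed.

Lemma valid_snoc K x c : valid_state K x -> (c < K)%nat -> valid_state K (x ++ [c]).
Proof. intros Hx Hc. apply valid_app. split; auto. repeat constructor; auto. Qed.

Lemma states_in K n y : In y (states K n) -> length y = n /\ valid_state K y.
Proof.
  revert y; induction n as [|n IH]; simpl; intros y H.
  - destruct H as [<-|[]]. split; [reflexivity | constructor].
  - apply in_flat_map in H as [x [Hx Hy]]. apply in_map_iff in Hy as [c [<- Hc]].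
    apply IH in Hx as [Hl Hv]. apply in_seq in Hc. split.
    + rewrite length_app; simpl; lia.
    + apply valid_snoc; auto; lia.
Qed.

Lemma states_complete K y : valid_state K y -> In y (states K (length y)).
Proof.
  induction y as [|c y IH] using rev_ind; simpl; intros Hv; [auto|].
  apply valid_app in Hv as [Hv Hc]. inversion Hc; subst.
  rewrite length_app, Nat.add_1_r. simpl.
  apply in_flat_map. exists y; split; auto.
  apply in_map_iff. exists c; split; [reflexivity|]. apply in_seq. lia.
Qed.

Lemma states_NoDup K n : NoDup (states K n).
Proof.
  induction n as [|n IH]; simpl; [repeat constructor; auto|].
  induction (states K n) as [|x l IHl]; simpl; [constructor|].
  inversion IH; subst. apply NoDup_app.
  - apply Injective_map_NoDup; [|apply seq_NoDup].
    intros a b H. apply app_inj_tail in H. tauto.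
  - apply IHl; auto.
  - intros a Ha Hb. apply in_map_iff in Ha as [c [<- _]].
    apply in_flat_map in Hb as [x' [Hx' Hb]]. apply in_map_iff in Hb as [c' [Heq _]].
    apply app_inj_tail in Heq as [-> _]. auto.
Qed.

Lemma sum_states_single K n y (f : list nat -> R) :
  valid_state K y -> length y = n ->
  (forall z, In z (states K n) -> z <> y -> f z = 0) ->
  sumR (map f (states K n)) = f y.
Proof.
  intros Hv Hl H. apply sumR_single; auto; [apply states_NoDup|].
  subst. apply states_complete; auto.
Qed.

Lemma sum_states_S K n (f : list nat -> R) :
  sumR (map f (states K (S n))) =
  sumR (map (fun y => sumR (map (fun c => f (y ++ [c])) (seq 0 K))) (states K n)).
Proof.
  simpl. rewrite sumR_flat_map. apply sumR_ext. intros x _. rewrite map_map. reflexivity.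
Qed.

Lemma nbrs_valid K x y : In y (nbrs K x) -> valid_state K y.
Proof.
  unfold nbrs. intros H. apply in_app_iff in H as [H|H].
  - apply states_in in H; tauto.
  - destruct (length x); [contradiction|]. apply states_in in H; tauto.
Qed.

Lemma rem_first_app_true p y w :
  existsb p y = true -> rem_first p (y ++ w) = rem_first p y ++ w.
Proof.
  induction y as [|a y IH]; simpl; [discriminate|].
  destruct (p a); simpl; auto. intros H; rewrite IH; auto.
Qed.

Lemma rem_first_app_false p y w :
  existsb p y = false -> rem_first p (y ++ w) = y ++ rem_first p w.
Proof.
  induction y as [|a y IH]; simpl; auto.
  destruct (p a); simpl; [discriminate|]. intros H; rewrite IH; auto.
Qed.

Lemma rem_first_length p y :
  existsb p y = true -> S (length (rem_first p y)) = length y.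
Proof. induction y as [|a y IH]; simpl; [discriminate|]. destruct (p a); simpl; auto. Qed.

Lemma rem_first_valid K p y : valid_state K y -> valid_state K (rem_first p y).
Proof.
  induction y as [|a y IH]; simpl; auto. intros H; inversion H; subst.
  destruct (p a); auto. constructor; auto. apply IH; auto.
Qed.

Definition nonholders (ts : list (nat * nat)) : nat := fold_right plus 0%nat (map snd ts).

Lemma nonholders_app l1 l2 : nonholders (l1 ++ l2) = (nonholders l1 + nonholders l2)%nat.
Proof. unfold nonholders. rewrite map_app, fold_right_app. induction (map snd l1); simpl; lia. Qed.

Lemma tsize_nonholders ts : tsize ts = (length ts + nonholders ts)%nat.
Proof. reflexivity. Qed.

Lemma nonholders_single T k : nonholders [(T, k)] = k.
Proof. unfold nonholders. simpl. lia. Qed.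

Lemma tsize_app l1 l2 : tsize (l1 ++ l2) = (tsize l1 + tsize l2)%nat.
Proof.
  pose proof (nonholders_app l1 l2). unfold tsize, nonholders in *.
  rewrite length_app. lia.
Qed.

Lemma tsize_snoc ts T k : tsize (ts ++ [(T, k)]) = (tsize ts + S k)%nat.
Proof. rewrite tsize_app. unfold tsize at 2. simpl. lia. Qed.

Lemma snoc_cases {T} (l : list T) : l = [] \/ exists l0 a, l = l0 ++ [a].
Proof. destruct l as [|a l] using rev_ind; [left; auto | right; eauto]. Qed.

Lemma incr_last_snoc l a b : incr_last (l ++ [(a, b)]) = l ++ [(a, S b)].
Proof.
  induction l as [|q l IH]; [reflexivity|].
  cbn [app]. rewrite <- IH. destruct l as [|r l]; reflexivity.
Qed.

Lemma token_state_snoc x c : token_state (x ++ [c]) = token_step (token_state x) c.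
Proof. unfold token_state. rewrite fold_left_app. reflexivity. Qed.

Lemma existsb_fst_in (t : list (nat * nat)) c :
  existsb (fun p => Nat.eqb (fst p) c) t = true <-> In c (map fst t).
Proof.
  rewrite existsb_exists. split.
  - intros [p [Hp He]]. apply Nat.eqb_eq in He. subst. apply in_map; auto.
  - intros H. apply in_map_iff in H as [p [<- Hp]]. exists p; split; auto. apply Nat.eqb_refl.
Qed.

Lemma token_step_held t c : In c (map fst t) ->
  exists t0 T k, t = t0 ++ [(T, k)] /\ token_step t c = t0 ++ [(T, S k)].
Proof.
  intros Hin. unfold token_step. apply existsb_fst_in in Hin. rewrite Hin.
  destruct (snoc_cases t) as [->|[t0 [[T k] ->]]]; [discriminate|].
  exists t0, T, k. split; [reflexivity | apply incr_last_snoc].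
Qed.

Lemma token_step_fresh t c : ~ In c (map fst t) -> token_step t c = t ++ [(c, 0%nat)].
Proof.
  intros Hn. unfold token_step. destruct existsb eqn:E; [|reflexivity].
  apply existsb_fst_in in E. contradiction.
Qed.

Lemma tokens_token_step t c :
  map fst (token_step t c) = if in_dec Nat.eq_dec c (map fst t) then map fst t else map fst t ++ [c].
Proof.
  destruct in_dec as [Hin|Hn].
  - destruct (token_step_held t c Hin) as [t0 [T [k [-> ->]]]]. rewrite !map_app. reflexivity.
  - rewrite token_step_fresh, map_app by auto. reflexivity.
Qed.

Lemma tsize_token_step t c : tsize (token_step t c) = S (tsize t).
Proof.
  destruct (in_dec Nat.eq_dec c (map fst t)) as [Hin|Hn].
  - destruct (token_step_held t c Hin) as [t0 [T [k [-> ->]]]]. rewrite !tsize_app.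
    unfold tsize; simpl. lia.
  - rewrite token_step_fresh, tsize_app by auto. unfold tsize; simpl. lia.
Qed.

Lemma tsize_token_state x : tsize (token_state x) = length x.
Proof.
  induction x as [|c x IH] using rev_ind; [reflexivity|].
  rewrite token_state_snoc, tsize_token_step, IH, length_app. simpl. lia.
Qed.

Lemma tokens_token_state x c : In c x <-> In c (map fst (token_state x)).
Proof.
  induction x as [|d x IH] using rev_ind; [simpl; tauto|].
  rewrite token_state_snoc, tokens_token_step, in_app_iff. simpl.
  destruct in_dec as [Hin|Hn]; rewrite ?in_app_iff; simpl; rewrite IH.
  - split; [intros [H|[<-|[]]]; auto | auto].
  - tauto.
Qed.

Lemma token_state_valid K x : valid_state K x -> valid_token K (token_state x).
Proof.
  induction x as [|d x IH] using rev_ind; intros Hv; [split; constructor|].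
  apply valid_app in Hv as [Hv Hd]. inversion Hd as [|? ? Hd' _]; subst.
  destruct (IH Hv) as [Hnd Hf].
  unfold valid_token. rewrite token_state_snoc, tokens_token_step.
  destruct in_dec as [Hin|Hn]; [split; auto|]. split.
  - apply NoDup_app; auto; [repeat constructor; auto|]. intros a Ha [<-|[]]. auto.
  - apply Forall_app; split; auto.
Qed.

Lemma existsb_map_fst (f : nat -> bool) (l : list (nat * nat)) :
  existsb (fun p => f (fst p)) l = existsb f (map fst l).
Proof. induction l as [|p l IH]; simpl; auto. rewrite IH. reflexivity. Qed.

Lemma existsb_token_state f x :
  existsb f x = existsb (fun p => f (fst p)) (token_state x).
Proof.
  rewrite existsb_map_fst. apply Bool.eq_iff_eq_true. rewrite !existsb_exists.
  split; intros [c [Hc Hf]]; exists c; split; auto; apply (tokens_token_state x c); auto.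
Qed.

Lemma token_step_new_iff t c ts0 T :
  token_step t c = ts0 ++ [(T, 0%nat)] <-> t = ts0 /\ c = T /\ ~ In c (map fst t).
Proof.
  destruct (in_dec Nat.eq_dec c (map fst t)) as [Hin|Hn].
  - destruct (token_step_held t c Hin) as [t0 [T' [k [-> ->]]]]. split; [|tauto].
    intros H. apply app_inj_tail in H as [_ H]. discriminate.
  - rewrite token_step_fresh by auto. split.
    + intros H. apply app_inj_tail in H as [-> H]. inversion H; subst. auto.
    + intros [-> [-> _]]. reflexivity.
Qed.

Lemma token_step_old_iff t c ts0 T k :
  token_step t c = ts0 ++ [(T, S k)] <-> t = ts0 ++ [(T, k)] /\ In c (map fst t).
Proof.
  destruct (in_dec Nat.eq_dec c (map fst t)) as [Hin|Hn].
  - destruct (token_step_held t c Hin) as [t0 [T' [k' [-> ->]]]]. split.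
    + intros H. apply app_inj_tail in H as [-> H]. inversion H; subst. auto.
    + intros [H _]. apply app_inj_tail in H as [-> H]. inversion H; subst. reflexivity.
  - rewrite token_step_fresh by auto. split; [|tauto].
    intros H. apply app_inj_tail in H as [_ H]. discriminate.
Qed.

Lemma valid_token_prefix K ts0 p : valid_token K (ts0 ++ [p]) -> valid_token K ts0.
Proof.
  intros [Hnd Hf]. rewrite map_app in *. split.
  - apply NoDup_app_remove_r in Hnd; auto.
  - apply Forall_app in Hf; tauto.
Qed.

Lemma LamP_tokens lam l1 l2 : map fst l1 = map fst l2 -> LamP lam l1 = LamP lam l2.
Proof. intros H. unfold LamP. rewrite <- (map_map fst lam), H, map_map. reflexivity. Qed.

Lemma Fcount_tokens nS compat l1 l2 :
  map fst l1 = map fst l2 -> Fcount nS compat l1 = Fcount nS compat l2.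
Proof.
  intros H. unfold Fcount. f_equal. apply filter_ext. intros s.
  rewrite !existsb_map_fst, H. reflexivity.
Qed.

Lemma sumR_tokens K lam t : valid_token K t ->
  sumR (map (fun c => if in_dec Nat.eq_dec c (map fst t) then lam c else 0) (seq 0 K)) =
  LamP lam t.
Proof.
  induction t as [|p t IH]; intros [Hnd Hf].
  - apply sumR_zero. intros; reflexivity.
  - simpl in Hnd, Hf. inversion Hnd; subst. inversion Hf; subst.
    change (LamP lam (p :: t)) with (lam (fst p) + LamP lam t).
    rewrite <- IH by (split; auto).
    rewrite <- (sumR_seq_indicator K (fst p) lam) by auto.
    rewrite <- sumR_plus. apply sumR_ext. intros c _.
    destruct (in_dec Nat.eq_dec c (map fst (p :: t))) as [[E|Hi]|Hi];
    destruct (Nat.eq_dec c (fst p)) as [E'|E'];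
    destruct (in_dec Nat.eq_dec c (map fst t)) as [Hi'|Hi']; subst; try lra;
    try contradiction; exfalso; apply Hi; simpl; auto.
Qed.

(** * The product-form measure on detailed states *)

Section Model.

Variables (K nS : nat) (lam A : nat -> R) (compat : nat -> nat -> bool).
Hypothesis hlam : forall c, (c < K)%nat -> 0 < lam c.
Hypothesis hA : forall n, (1 <= n)%nat -> 0 < A n.
Hypothesis hF : forall c, (c < K)%nat -> exists s, (s < nS)%nat /\ compat s c = true.

Definition Fl (x : list nat) : R :=
  sumR (map (fun s => if existsb (compat s) x then 1 else 0) (seq 0 nS)).

Fixpoint muP (p z : list nat) : R :=
  match z with
  | [] => 1
  | c :: z' => lam c / (A (S (length p)) * Fl (p ++ [c])) * muP (p ++ [c]) z'
  end.

Definition mu (x : list nat) : R := muP [] x.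

Lemma Fl_ext p q :
  (forall s, existsb (compat s) p = existsb (compat s) q) -> Fl p = Fl q.
Proof. intros H. unfold Fl. apply sumR_ext. intros s _. rewrite H. reflexivity. Qed.

Lemma Fl_nonneg p : 0 <= Fl p.
Proof. unfold Fl. apply sumR_nonneg. intros s _. destruct existsb; lra. Qed.

Lemma Fl_nil : Fl [] = 0.
Proof. unfold Fl. apply sumR_zero. intros; reflexivity. Qed.

Lemma Fl_pos p c : In c p -> (c < K)%nat -> 0 < Fl p.
Proof.
  intros Hin Hc. destruct (hF c Hc) as [s [Hs Hcs]]. unfold Fl.
  apply (sumR_pos _ _ s).
  - intros x _. destruct existsb; lra.
  - apply in_seq; lia.
  - replace (existsb (compat s) p) with true; [lra|]. symmetry. apply existsb_exists. eauto.
Qed.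

Lemma Fl_snoc_pos p c : (c < K)%nat -> 0 < Fl (p ++ [c]).
Proof. intros Hc. apply (Fl_pos _ c); auto. apply in_app_iff; simpl; auto. Qed.

Lemma Fl_snoc_diff x c :
  Fl (x ++ [c]) = Fl x +
    sumR (map (fun s => if existsb (compat s) x then 0 else if compat s c then 1 else 0)
              (seq 0 nS)).
Proof.
  unfold Fl. rewrite <- sumR_plus. apply sumR_ext. intros s _.
  rewrite existsb_app. simpl. destruct (existsb (compat s) x), (compat s c); simpl; lra.
Qed.

Lemma Fl_token_state x : Fl x = INR (Fcount nS compat (token_state x)).
Proof.
  unfold Fl, Fcount. rewrite sumR_indicator_count, Rmult_1_r. do 2 f_equal.
  apply filter_ext. intros s. apply existsb_token_state.
Qed.

Lemma muP_app p z1 z2 : muP p (z1 ++ z2) = muP p z1 * muP (p ++ z1) z2.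
Proof.
  revert p; induction z1 as [|c z1 IH]; intros p; simpl.
  - rewrite app_nil_r. lra.
  - rewrite IH, <- app_assoc. simpl. lra.
Qed.

Lemma muP_ext p q z :
  length p = length q -> (forall s, existsb (compat s) p = existsb (compat s) q) ->
  muP p z = muP q z.
Proof.
  revert p q; induction z as [|c z IH]; intros p q Hl He; simpl; auto.
  assert (He' : forall s, existsb (compat s) (p ++ [c]) = existsb (compat s) (q ++ [c]))
    by (intros s; rewrite !existsb_app, He; auto).
  rewrite Hl, (Fl_ext _ _ He'), (IH (p ++ [c]) (q ++ [c])); auto.
  rewrite !length_app; lia.
Qed.

Lemma mu_nil : mu [] = 1.
Proof. reflexivity. Qed.

Lemma mu_app x z : mu (x ++ z) = mu x * muP x z.
Proof. unfold mu. rewrite muP_app. reflexivity. Qed.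

Lemma mu_snoc x c : mu (x ++ [c]) = mu x * (lam c / (A (S (length x)) * Fl (x ++ [c]))).
Proof. rewrite mu_app. simpl. lra. Qed.

Lemma muP_pos p z : valid_state K z -> 0 < muP p z.
Proof.
  revert p; induction z as [|c z IH]; intros p Hv; simpl; [lra|].
  inversion Hv; subst.
  assert (0 < Fl (p ++ [c])) by (apply Fl_snoc_pos; auto).
  assert (0 < A (S (length p))) by (apply hA; lia).
  assert (0 < lam c) by auto.
  apply Rmult_lt_0_compat; auto. apply Rdiv_lt_0_compat; auto. apply Rmult_lt_0_compat; auto.
Qed.

Lemma mu_pos x : valid_state K x -> 0 < mu x.
Proof. apply muP_pos. Qed.

Lemma mu_swap p c d z :
  (c < K)%nat -> (d < K)%nat ->
  mu (p ++ c :: d :: z) * Fl (p ++ [c]) = mu (p ++ d :: c :: z) * Fl (p ++ [d]).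
Proof.
  intros Hc Hd. rewrite !mu_app. simpl. rewrite <- !app_assoc. simpl.
  assert (He : forall s, existsb (compat s) (p ++ [c; d]) = existsb (compat s) (p ++ [d; c])).
  { intros s. rewrite !existsb_app. simpl.
    destruct (compat s c), (compat s d), (existsb (compat s) p); reflexivity. }
  rewrite (Fl_ext _ _ He), (muP_ext (p ++ [c; d]) (p ++ [d; c])) by (rewrite ?length_app; auto).
  rewrite !length_app. simpl.
  assert (0 < Fl (p ++ [c])) by (apply Fl_snoc_pos; auto).
  assert (0 < Fl (p ++ [d])) by (apply Fl_snoc_pos; auto).
  assert (0 < Fl (p ++ [d; c])) by (apply (Fl_pos _ d); auto; apply in_app_iff; simpl; auto).
  assert (0 < A (S (length p))) by (apply hA; lia).
  assert (0 < A (S (length p + 1))) by (apply hA; lia).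
  field. repeat split; lra.
Qed.

Definition total_lam : R := sumR (map lam (seq 0 K)).

Definition arrival_rate (y x : list nat) : R :=
  sumR (map (fun c => if list_eq_dec Nat.eq_dec x (y ++ [c]) then lam c else 0) (seq 0 K)).

Definition service_rate (y x : list nat) : R :=
  sumR (map (fun s =>
        if existsb (compat s) y then
          (if list_eq_dec Nat.eq_dec x (rem_first (compat s) y) then A (length y) else 0)
        else 0) (seq 0 nS)).

Lemma rate_split y x : rate K nS lam A compat y x = arrival_rate y x + service_rate y x.
Proof. reflexivity. Qed.

Lemma total_lam_nonneg : 0 <= total_lam.
Proof.
  unfold total_lam. apply sumR_nonneg. intros c Hc. apply in_seq in Hc.
  specialize (hlam c ltac:(lia)). lra.
Qed.

Lemma arrival_rate_length y x : length x <> S (length y) -> arrival_rate y x = 0.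
Proof.
  intros H. unfold arrival_rate. apply sumR_zero. intros c _.
  destruct list_eq_dec as [->|]; auto. rewrite length_app in H; simpl in H; lia.
Qed.

Lemma service_rate_length y x : S (length x) <> length y -> service_rate y x = 0.
Proof.
  intros H. unfold service_rate. apply sumR_zero. intros s _.
  destruct (existsb (compat s) y) eqn:E; auto.
  destruct list_eq_dec as [->|]; auto. rewrite rem_first_length in H; auto; lia.
Qed.

Lemma rate_nonneg y x : 0 <= rate K nS lam A compat y x.
Proof.
  rewrite rate_split. apply Rplus_le_le_0_compat; apply sumR_nonneg.
  - intros c Hc. apply in_seq in Hc.
    destruct list_eq_dec; [specialize (hlam c ltac:(lia)) |]; lra.
  - intros s _. destruct (existsb (compat s) y) eqn:E; [|lra]. destruct list_eq_dec; [|lra].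
    destruct y; [discriminate|]. left. apply hA. simpl; lia.
Qed.

Lemma arrival_rate_snoc y x d : (d < K)%nat ->
  arrival_rate y (x ++ [d]) = if list_eq_dec Nat.eq_dec y x then lam d else 0.
Proof.
  intros Hd. unfold arrival_rate.
  destruct (list_eq_dec Nat.eq_dec y x) as [->|Hne].
  - rewrite <- (sumR_seq_indicator K d lam Hd). apply sumR_ext. intros c _.
    destruct list_eq_dec as [E|E]; destruct (Nat.eq_dec c d) as [E'|E']; subst; auto.
    + apply app_inj_tail in E. destruct E; congruence.
    + congruence.
  - apply sumR_zero. intros c _. destruct list_eq_dec as [E|E]; auto.
    apply app_inj_tail in E. destruct E; congruence.
Qed.

Lemma rate_arrival_pos x d : (d < K)%nat -> 0 < rate K nS lam A compat x (x ++ [d]).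
Proof.
  intros Hd. rewrite rate_split, arrival_rate_snoc, service_rate_length
    by (rewrite ?length_app; simpl; lia).
  destruct list_eq_dec; [|congruence]. pose proof (hlam d Hd). lra.
Qed.

Lemma rate_service_head_pos d x : (d < K)%nat -> 0 < rate K nS lam A compat (d :: x) x.
Proof.
  intros Hd. rewrite rate_split, arrival_rate_length, Rplus_0_l by (simpl; lia).
  destruct (hF d Hd) as [s [Hs Hcs]]. unfold service_rate. apply (sumR_pos _ _ s).
  - intros s' _. destruct existsb; [destruct list_eq_dec|]; try lra.
    left. apply hA. simpl. lia.
  - apply in_seq; lia.
  - simpl. rewrite Hcs. simpl. destruct list_eq_dec; [|congruence]. apply hA; simpl; lia.
Qed.

Lemma rate_sum_up y : valid_state K y ->
  sumR (map (rate K nS lam A compat y) (states K (S (length y)))) = total_lam.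
Proof.
  intros Hv.
  rewrite (sumR_ext _ (fun x => arrival_rate y x + service_rate y x)) by (intros; apply rate_split).
  rewrite sumR_plus, (sumR_zero (service_rate y)), Rplus_0_r.
  2:{ intros x Hx. apply states_in in Hx as [Hl _]. apply service_rate_length. lia. }
  unfold arrival_rate. rewrite sumR_swap. apply sumR_ext. intros c Hc. apply in_seq in Hc.
  rewrite (sum_states_single K _ (y ++ [c])).
  - destruct list_eq_dec; congruence.
  - apply valid_snoc; auto; lia.
  - rewrite length_app; simpl; lia.
  - intros z _ Hz. destruct list_eq_dec; congruence.
Qed.

Lemma rate_sum_down y m : valid_state K y -> length y = S m ->
  sumR (map (rate K nS lam A compat y) (states K m)) = A (length y) * Fl y.
Proof.
  intros Hv Hl.
  rewrite (sumR_ext _ (fun x => arrival_rate y x + service_rate y x)) by (intros; apply rate_split).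
  rewrite sumR_plus, (sumR_zero (arrival_rate y)), Rplus_0_l.
  2:{ intros x Hx. apply states_in in Hx as [Hl' _]. apply arrival_rate_length. lia. }
  unfold service_rate. rewrite sumR_swap. unfold Fl. rewrite <- sumR_scal.
  apply sumR_ext. intros s _.
  destruct (existsb (compat s) y) eqn:E; [|rewrite sumR_zero; auto; lra].
  rewrite (sum_states_single K _ (rem_first (compat s) y)).
  - destruct list_eq_dec; [lra | congruence].
  - apply rem_first_valid; auto.
  - pose proof (rem_first_length _ _ E). lia.
  - intros z _ Hz. destruct list_eq_dec; congruence.
Qed.

Definition out_rate (y : list nat) : R := total_lam + A (length y) * Fl y.

Lemma out_rate_eq y : valid_state K y ->
  sumR (map (rate K nS lam A compat y) (nbrs K y)) = out_rate y.
Proof.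
  intros Hv. unfold nbrs, out_rate. rewrite map_app, sumR_app, rate_sum_up by auto.
  destruct (length y) eqn:Hl.
  - destruct y; [|discriminate]. rewrite Fl_nil. simpl. lra.
  - rewrite <- Hl, rate_sum_down; auto.
Qed.

(** * Global balance of mu *)

Definition removal_term (s : nat) (f : list nat -> R) (x y : list nat) : R :=
  if existsb (compat s) y then
    if list_eq_dec Nat.eq_dec x (rem_first (compat s) y) then f y else 0
  else 0.

Definition removal_inflow (s : nat) (f : list nat -> R) (x : list nat) : R :=
  sumR (map (removal_term s f x) (states K (S (length x)))).

Lemma removal_inflow_ext s f g x :
  (forall y, f y = g y) -> removal_inflow s f x = removal_inflow s g x.
Proof.
  intros H. unfold removal_inflow, removal_term. apply sumR_ext. intros y _.
  rewrite H. reflexivity.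
Qed.

Lemma removal_inflow_nil s f :
  removal_inflow s f [] = sumR (map (fun c => if compat s c then f [c] else 0) (seq 0 K)).
Proof.
  unfold removal_inflow. simpl length. rewrite sum_states_S. simpl. rewrite Rplus_0_r.
  apply sumR_ext. intros c _. unfold removal_term. simpl.
  destruct (compat s c); reflexivity.
Qed.

(* A state y ++ [c] leads to x ++ [d] by a type-s server either because the
   server takes a customer of y and c = d, or because y = x ++ [d] cannot use
   the server and c is taken. *)
Lemma removal_term_snoc s f x d y c :
  removal_term s f (x ++ [d]) (y ++ [c]) =
  (if Nat.eq_dec c d then removal_term s (fun w => f (w ++ [d])) x y else 0) +
  (if list_eq_dec Nat.eq_dec y (x ++ [d]) then
     if existsb (compat s) (x ++ [d]) then 0 else if compat s c then f ((x ++ [d]) ++ [c]) else 0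
   else 0).
Proof.
  unfold removal_term. rewrite existsb_app. simpl. rewrite Bool.orb_false_r.
  destruct (existsb (compat s) y) eqn:Ey; simpl.
  - rewrite rem_first_app_true by auto.
    assert (Hz : (if list_eq_dec Nat.eq_dec y (x ++ [d]) then
        if existsb (compat s) (x ++ [d]) then 0
        else if compat s c then f ((x ++ [d]) ++ [c]) else 0 else 0) = 0)
      by (destruct list_eq_dec as [->|]; [rewrite Ey|]; reflexivity).
    rewrite Hz, Rplus_0_r. clear Hz.
    destruct (Nat.eq_dec c d) as [->|Hcd].
    + destruct (list_eq_dec Nat.eq_dec (x ++ [d]) (rem_first (compat s) y ++ [d])) as [E1|E1];
        destruct (list_eq_dec Nat.eq_dec x (rem_first (compat s) y)) as [E2|E2]; auto; exfalso.
      * apply E2. apply app_inj_tail in E1. tauto.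
      * apply E1. rewrite E2. reflexivity.
    + destruct list_eq_dec as [E1|E1]; auto. exfalso. apply app_inj_tail in E1. destruct E1; congruence.
  - rewrite rem_first_app_false by auto. simpl.
    replace (if Nat.eq_dec c d then 0 else 0) with 0 by (destruct Nat.eq_dec; reflexivity).
    rewrite Rplus_0_l.
    destruct (compat s c); [rewrite app_nil_r |
      destruct list_eq_dec; [destruct (existsb (compat s) (x ++ [d]))|]; reflexivity].
    destruct (list_eq_dec Nat.eq_dec y (x ++ [d])) as [->|Hy].
    + rewrite Ey. destruct list_eq_dec; congruence.
    + destruct list_eq_dec; congruence.
Qed.

Lemma removal_inflow_snoc s f x d :
  valid_state K (x ++ [d]) -> (d < K)%nat ->
  removal_inflow s f (x ++ [d]) =
  removal_inflow s (fun w => f (w ++ [d])) x +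
  (if existsb (compat s) (x ++ [d]) then 0
   else sumR (map (fun c => if compat s c then f ((x ++ [d]) ++ [c]) else 0) (seq 0 K))).
Proof.
  intros Hv Hd. unfold removal_inflow at 1.
  rewrite length_app, Nat.add_1_r, sum_states_S.
  rewrite (sumR_ext _ (fun y => sumR (map (fun c =>
     (if Nat.eq_dec c d then removal_term s (fun w => f (w ++ [d])) x y else 0)) (seq 0 K)) +
     sumR (map (fun c => if list_eq_dec Nat.eq_dec y (x ++ [d]) then
        if existsb (compat s) (x ++ [d]) then 0
        else if compat s c then f ((x ++ [d]) ++ [c]) else 0 else 0) (seq 0 K))))
    by (intros y _; rewrite <- sumR_plus; apply sumR_ext; intros c _; apply removal_term_snoc).
  rewrite sumR_plus. f_equal.
  - apply sumR_ext. intros y _. apply (sumR_seq_indicator K d (fun _ => _)); auto.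
  - rewrite (sum_states_single K _ (x ++ [d])); auto.
    + destruct list_eq_dec; [|congruence]. destruct existsb; [apply sumR_zero; auto | reflexivity].
    + rewrite length_app; simpl; lia.
    + intros w _ Hw. apply sumR_zero. intros c _. destruct list_eq_dec; congruence.
Qed.

Definition service_inflow (x z : list nat) : R :=
  sumR (map (fun s => removal_inflow s (fun y => mu (y ++ z)) x) (seq 0 nS)).

Lemma service_inflow_closed x : valid_state K x -> forall z,
  service_inflow x z = sumR (map (fun c => mu (x ++ c :: z) * Fl (x ++ [c])) (seq 0 K)).
Proof.
  induction x as [|d x IH] using rev_ind; intros Hv z; unfold service_inflow.
  - rewrite (sumR_ext _ _ _ (fun s _ => removal_inflow_nil s _)), sumR_swap.
    apply sumR_ext. intros c _. unfold Fl. rewrite <- sumR_scal. apply sumR_ext.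
    intros s _. simpl. destruct (compat s c); simpl; lra.
  - pose proof Hv as Hv1. apply valid_app in Hv as [Hv Hd]. inversion Hd as [|? ? Hd' _]; subst.
    set (x1 := x ++ [d]).
    rewrite (sumR_ext _ _ _ (fun s _ => removal_inflow_snoc s _ x d Hv1 Hd')), sumR_plus.
    rewrite (sumR_ext _ (fun s => removal_inflow s (fun y => mu (y ++ d :: z)) x))
      by (intros s _; apply removal_inflow_ext; intros y; rewrite <- app_assoc; reflexivity).
    fold (service_inflow x (d :: z)). rewrite IH by auto.
    (* the newcomer c now arrives before d: exchange identity *)
    assert (Hswap : sumR (map (fun c => mu (x ++ c :: d :: z) * Fl (x ++ [c])) (seq 0 K)) =
                    sumR (map (fun c => mu (x1 ++ c :: z) * Fl x1) (seq 0 K))).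
    { apply sumR_ext. intros c Hc. apply in_seq in Hc. rewrite mu_swap by lia.
      unfold x1. rewrite <- app_assoc. reflexivity. }
    (* server types that only become useful with the newcomer *)
    assert (Hnew : sumR (map (fun s => if existsb (compat s) x1 then 0 else
                     sumR (map (fun c => if compat s c then mu ((x1 ++ [c]) ++ z) else 0)
                               (seq 0 K))) (seq 0 nS)) =
                   sumR (map (fun c => mu (x1 ++ c :: z) * (Fl (x1 ++ [c]) - Fl x1)) (seq 0 K))).
    { rewrite (sumR_ext _ (fun s => sumR (map (fun c => mu (x1 ++ c :: z) *
          (if existsb (compat s) x1 then 0 else if compat s c then 1 else 0)) (seq 0 K)))).
      - rewrite sumR_swap. apply sumR_ext. intros c _.
        rewrite sumR_scal, (Fl_snoc_diff x1 c). ring.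
      - intros s _. destruct (existsb (compat s) x1).
        + symmetry. apply sumR_zero. intros; lra.
        + apply sumR_ext. intros c _. rewrite <- app_assoc. destruct (compat s c); simpl; lra. }
    fold x1. rewrite Hswap, Hnew, <- sumR_plus. apply sumR_ext. intros c _. ring.
Qed.

Lemma inflow_from_above x : valid_state K x ->
  sumR (map (fun y => mu y * rate K nS lam A compat y x) (states K (S (length x)))) =
  mu x * total_lam.
Proof.
  intros Hv. transitivity (A (S (length x)) * service_inflow x []).
  - unfold service_inflow, removal_inflow. rewrite sumR_swap, <- sumR_scal. apply sumR_ext.
    intros y Hy. apply states_in in Hy as [Hly _].
    rewrite rate_split, arrival_rate_length, Rplus_0_l by lia. unfold service_rate, removal_term.
    rewrite <- !sumR_scal. apply sumR_ext. intros s _. rewrite app_nil_r, Hly.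
    destruct existsb; [destruct list_eq_dec|]; lra.
  - rewrite service_inflow_closed by auto. unfold total_lam. rewrite <- !sumR_scal.
    apply sumR_ext. intros c Hc. apply in_seq in Hc. rewrite mu_snoc.
    assert (0 < Fl (x ++ [c])) by (apply Fl_snoc_pos; lia).
    assert (0 < A (S (length x))) by (apply hA; lia).
    field. lra.
Qed.

Lemma inflow_from_below x d : valid_state K x -> (d < K)%nat ->
  sumR (map (fun y => mu y * rate K nS lam A compat y (x ++ [d])) (states K (length x))) =
  mu (x ++ [d]) * (A (S (length x)) * Fl (x ++ [d])).
Proof.
  intros Hv Hd. rewrite (sum_states_single K _ x); auto.
  - rewrite rate_split, service_rate_length by (rewrite length_app; simpl; lia).
    rewrite arrival_rate_snoc by auto. destruct list_eq_dec; [|congruence].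
    rewrite mu_snoc.
    assert (0 < Fl (x ++ [d])) by (apply Fl_snoc_pos; auto).
    assert (0 < A (S (length x))) by (apply hA; lia).
    field. lra.
  - intros y Hy Hne. rewrite rate_split, service_rate_length.
    + rewrite arrival_rate_snoc by auto. destruct list_eq_dec; [congruence | lra].
    + apply states_in in Hy as [Hly _]. rewrite length_app; simpl; lia.
Qed.

Lemma mu_balance x : valid_state K x ->
  mu x * out_rate x = sumR (map (fun y => mu y * rate K nS lam A compat y x) (nbrs K x)).
Proof.
  intros Hv. unfold nbrs, out_rate. rewrite map_app, sumR_app, inflow_from_above by auto.
  destruct (snoc_cases x) as [->|[x0 [d ->]]].
  - simpl. rewrite Fl_nil. lra.
  - apply valid_app in Hv as [Hv0 Hd]. inversion Hd; subst.
    rewrite length_app, Nat.add_1_r. simpl. rewrite inflow_from_below by auto. ring.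
Qed.

(** * Uniqueness: a minimum principle for pi / mu *)

Lemma sum_min_le {T} (w a : T -> R) l M a0 c :
  (forall y, In y l -> 0 <= w y) ->
  sumR (map (fun y => w y * a y) l) = M * a0 -> sumR (map w l) = M ->
  sumR (map (fun y => w y * Rmin (a y) c) l) <= M * Rmin a0 c.
Proof.
  intros Hw Ha HM.
  assert (H1 : sumR (map (fun y => w y * Rmin (a y) c) l) <= M * a0).
  { rewrite <- Ha. apply sumR_le. intros y Hy. specialize (Hw y Hy).
    apply Rmult_le_compat_l; [lra | apply Rmin_l]. }
  assert (H2 : sumR (map (fun y => w y * Rmin (a y) c) l) <= M * c).
  { rewrite <- HM, <- sumR_scalr. apply sumR_le. intros y Hy. specialize (Hw y Hy).
    apply Rmult_le_compat_l; [lra | apply Rmin_r]. }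
  destruct (Rle_dec a0 c); [rewrite Rmin_left | rewrite Rmin_right]; lra.
Qed.

Lemma sum_min_saturated {T} (w a : T -> R) l M c :
  (forall y, In y l -> 0 <= w y) -> sumR (map w l) = M ->
  sumR (map (fun y => w y * Rmin (a y) c) l) = M * c ->
  forall y, In y l -> 0 < w y -> c <= a y.
Proof.
  intros Hw HM Hs y Hy Hwy.
  assert (Hzero : sumR (map (fun y => w y * (c - Rmin (a y) c)) l) = 0).
  { rewrite (sumR_ext _ (fun y => w y * c + (-1) * (w y * Rmin (a y) c))) by (intros; ring).
    rewrite sumR_plus, sumR_scal, sumR_scalr, Hs, HM. ring. }
  assert (Hnn : forall y, In y l -> 0 <= w y * (c - Rmin (a y) c)).
  { intros y' Hy'. apply Rmult_le_pos; auto. pose proof (Rmin_r (a y') c). lra. }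
  pose proof (sumR_all_zero _ _ Hnn Hzero y Hy) as Hterm. simpl in Hterm.
  assert (Rmin (a y) c = c).
  { apply Rmult_integral in Hterm as [|]; lra. }
  pose proof (Rmin_l (a y) c). lra.
Qed.

Lemma level_inflow (v : list nat -> R) N :
  sumR (map (fun x => sumR (map (fun y => v y * rate K nS lam A compat y x) (nbrs K x)))
            (states K N)) =
  sumR (map (fun y => v y * (A (S N) * Fl y)) (states K (S N))) +
  prev_term (fun M => sumR (map (fun y => v y * total_lam) (states K M))) N.
Proof.
  rewrite (sumR_ext _ (fun x => sumR (map (fun y => v y * rate K nS lam A compat y x)
      (states K (S N))) + sumR (map (fun y => v y * rate K nS lam A compat y x)
      (match N with O => [] | S m => states K m end)))).
  2:{ intros x Hx. apply states_in in Hx as [Hl _]. unfold nbrs. rewrite Hl, map_app, sumR_app.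
      reflexivity. }
  rewrite sumR_plus, sumR_swap. f_equal.
  - apply sumR_ext. intros y Hy. apply states_in in Hy as [Hl Hv].
    rewrite sumR_scal, (rate_sum_down y N Hv Hl), Hl. reflexivity.
  - destruct N as [|N]; simpl; [lra|]. rewrite sumR_swap. apply sumR_ext.
    intros y Hy. apply states_in in Hy as [Hl Hv]. rewrite sumR_scal, <- Hl.
    change (flat_map (fun x => map (fun c => x ++ [c]) (seq 0 K)) (states K (length y)))
      with (states K (S (length y))).
    rewrite rate_sum_up by auto. reflexivity.
Qed.

Section Truncation.

Variable pi : list nat -> R.
Hypothesis pi_nonneg : forall x, valid_state K x -> 0 <= pi x.
Hypothesis pi_summable : infinite_sum (fun N => sumR (map pi (states K N))) 1.
Hypothesis pi_balance : forall x, valid_state K x ->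
  pi x * sumR (map (rate K nS lam A compat x) (nbrs K x)) =
  sumR (map (fun y => pi y * rate K nS lam A compat y x) (nbrs K x)).

Variable c : R.
Hypothesis c_nonneg : 0 <= c.

Definition ratio (x : list nat) : R := pi x / mu x.

Definition trunc (x : list nat) : R := Rmin (ratio x) c.

Definition defect (x : list nat) : R :=
  mu x * out_rate x * trunc x -
  sumR (map (fun y => mu y * rate K nS lam A compat y x * trunc y) (nbrs K x)).

Lemma mu_ratio x : valid_state K x -> mu x * ratio x = pi x.
Proof. intros Hx. unfold ratio. pose proof (mu_pos x Hx). field. lra. Qed.

Lemma trunc_nonneg x : valid_state K x -> 0 <= trunc x.
Proof.
  intros Hx. unfold trunc, ratio. apply Rmin_glb; auto.
  apply Rmult_le_pos; [auto | left; apply Rinv_0_lt_compat, mu_pos; auto].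
Qed.

(* Balance of pi and of mu: the truncation is superharmonic. *)
Lemma defect_nonneg x : valid_state K x -> 0 <= defect x.
Proof.
  intros Hx. unfold defect, trunc.
  assert (Hle : sumR (map (fun y => mu y * rate K nS lam A compat y x * Rmin (ratio y) c)
                          (nbrs K x)) <= mu x * out_rate x * Rmin (ratio x) c).
  { apply (sum_min_le (fun y => mu y * rate K nS lam A compat y x) ratio).
    - intros y Hy. pose proof (mu_pos y (nbrs_valid K x y Hy)).
      pose proof (rate_nonneg y x). nra.
    - rewrite (sumR_ext _ (fun y => pi y * rate K nS lam A compat y x)).
      + rewrite <- pi_balance, out_rate_eq, <- mu_ratio by auto. ring.
      + intros y Hy. rewrite <- (mu_ratio y) by (eapply nbrs_valid; eauto). ring.
    - rewrite <- mu_balance by auto. reflexivity. }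
  lra.
Qed.

Definition level_up_mass (N : nat) : R :=
  sumR (map (fun x => mu x * trunc x * total_lam) (states K N)).
Definition level_down_mass (N : nat) : R :=
  sumR (map (fun x => mu x * trunc x * (A N * Fl x)) (states K N)).

Lemma level_defect N :
  sumR (map defect (states K N)) =
  level_up_mass N + level_down_mass N - prev_term level_up_mass N - level_down_mass (S N).
Proof.
  unfold defect. rewrite (sumR_ext _ (fun x => mu x * out_rate x * trunc x + (-1) *
      sumR (map (fun y => (mu y * trunc y) * rate K nS lam A compat y x) (nbrs K x)))).
  2:{ intros x _. rewrite (sumR_ext (fun y => mu y * rate K nS lam A compat y x * trunc y)
        (fun y => mu y * trunc y * rate K nS lam A compat y x)) by (intros; ring). ring. }
  rewrite sumR_plus, sumR_scal, level_inflow.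
  assert (Hout : sumR (map (fun x => mu x * out_rate x * trunc x) (states K N)) =
                 level_up_mass N + level_down_mass N).
  { unfold level_up_mass, level_down_mass. rewrite <- sumR_plus. apply sumR_ext.
    intros x Hx. apply states_in in Hx as [Hl _]. unfold out_rate. rewrite Hl. ring. }
  rewrite Hout. unfold level_up_mass, level_down_mass, prev_term. destruct N; ring.
Qed.

(* Summability of pi forces all defects to vanish. *)
Lemma defect_zero x : valid_state K x -> defect x = 0.
Proof.
  intros Hx.
  assert (Hlevels : forall N, sumR (map defect (states K N)) = 0).
  { apply (dominated_by_series_terms_zero (fun N => sumR (map defect (states K N)))
           (fun N => sumR (map pi (states K N))) total_lam 1 total_lam_nonneg); auto.
    - intros N. apply sumR_nonneg. intros y Hy. apply defect_nonneg. apply states_in in Hy; tauto.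
    - intros M. rewrite (telescoping_partial_sums _ _ _ level_defect).
      + assert (0 <= level_down_mass (S M)).
        { apply sumR_nonneg. intros y Hy. apply states_in in Hy as [Hl Hv].
          pose proof (mu_pos y Hv). pose proof (trunc_nonneg y Hv). pose proof (Fl_nonneg y).
          assert (0 < A (S M)) by (apply hA; lia).
          apply Rmult_le_pos; [nra|]. nra. }
        assert (level_up_mass M <= total_lam * sumR (map pi (states K M))); [|lra].
        unfold level_up_mass. rewrite <- sumR_scal. apply sumR_le.
        intros y Hy. apply states_in in Hy as [_ Hv]. rewrite <- (mu_ratio y Hv).
        pose proof (mu_pos y Hv). pose proof total_lam_nonneg.
        assert (trunc y <= ratio y) by apply Rmin_l.
        assert (mu y * trunc y <= mu y * ratio y) by nra. nra.
      + unfold level_down_mass. simpl. rewrite Fl_nil. ring. }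
  apply (sumR_all_zero defect (states K (length x))); auto.
  - intros y Hy. apply defect_nonneg. apply states_in in Hy; tauto.
  - apply states_complete; auto.
Qed.

End Truncation.

Lemma ratio_le_predecessor pi z y :
  stationary K nS lam A compat pi -> valid_state K z ->
  In y (nbrs K z) -> 0 < rate K nS lam A compat y z -> ratio pi z <= ratio pi y.
Proof.
  intros [Hnn [Hsum Hbal]] Hz Hy Hr.
  assert (Hc : 0 <= ratio pi z).
  { unfold ratio. apply Rmult_le_pos; [auto | left; apply Rinv_0_lt_compat, mu_pos; auto]. }
  pose proof (defect_zero pi Hnn Hsum Hbal (ratio pi z) Hc z Hz) as Hdef.
  unfold defect, trunc in Hdef. rewrite Rmin_left in Hdef by lra.
  apply (sum_min_saturated (fun y => mu y * rate K nS lam A compat y z) (ratio pi)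
           (nbrs K z) (mu z * out_rate z)); auto.
  - intros y' Hy'. pose proof (mu_pos y' (nbrs_valid K z y' Hy')).
    pose proof (rate_nonneg y' z). nra.
  - rewrite <- mu_balance by auto. reflexivity.
  - lra.
  - pose proof (mu_pos y (nbrs_valid K z y Hy)). nra.
Qed.

(* pi / mu can only decrease along arrivals, so the empty state maximises it ... *)
Lemma ratio_le_ratio_nil pi x :
  stationary K nS lam A compat pi -> valid_state K x -> ratio pi x <= ratio pi [].
Proof.
  intros Hst. induction x as [|d x IH] using rev_ind; intros Hv; [lra|].
  apply valid_app in Hv as [Hv Hd]. inversion Hd as [|? ? Hd' _]; subst.
  apply (Rle_trans _ (ratio pi x)); [|auto].
  apply ratio_le_predecessor; auto.
  - apply valid_snoc; auto.
  - unfold nbrs. rewrite length_app, Nat.add_1_r. apply in_app_iff; right.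
    apply states_complete; auto.
  - apply rate_arrival_pos; auto.
Qed.

(* ... and along services of the oldest customer, so the empty state also
   minimises it. *)
Lemma ratio_nil_le_ratio pi x :
  stationary K nS lam A compat pi -> valid_state K x -> ratio pi [] <= ratio pi x.
Proof.
  intros Hst. induction x as [|d x IH]; intros Hv; [lra|].
  inversion Hv as [|? ? Hd Hv']; subst.
  apply (Rle_trans _ (ratio pi x)); [auto|].
  apply ratio_le_predecessor; auto.
  - unfold nbrs. apply in_app_iff; left. apply states_complete; auto.
  - apply rate_service_head_pos; auto.
Qed.

Lemma stationary_product_form pi x :
  stationary K nS lam A compat pi -> valid_state K x -> pi x = pi [] * mu x.
Proof.
  intros Hst Hv.
  assert (Heq : ratio pi x = ratio pi [])
    by (apply Rle_antisym; [apply ratio_le_ratio_nil | apply ratio_nil_le_ratio]; auto).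
  unfold ratio in Heq. rewrite mu_nil, Rdiv_1_r in Heq. rewrite <- Heq.
  pose proof (mu_pos x Hv). field. lra.
Qed.

Definition block_factor (P : list (nat * nat)) (p : nat * nat) : R :=
  lam (fst p) / (A (length P) * LamP lam P) *
  (LamP lam P / INR (Fcount nS compat P)) ^ (S (snd p)).

Definition block_factors (ts : list (nat * nat)) : R :=
  prodR (map (fun j =>
      let P := firstn j ts in
      let Tj := fst (nth (j - 1) ts (0%nat, 0%nat)) in
      let nj := snd (nth (j - 1) ts (0%nat, 0%nat)) in
      lam Tj / (A j * LamP lam P) * (LamP lam P / INR (Fcount nS compat P)) ^ (S nj))
    (seq 1 (length ts))).

Definition service_factors (a s : nat) : R := prodR (map (fun k => / A k) (seq a s)).

Lemma weight_split ts :
  weight nS lam A compat ts = block_factors ts * service_factors (S (length ts)) (nonholders ts).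
Proof.
  unfold weight, block_factors, service_factors, nonholders. f_equal. f_equal.
  generalize (fold_right Init.Nat.add 0%nat (map snd ts)) as s.
  assert (H : forall s a, map (fun m => / A (length ts + m)%nat) (seq a s) =
                          map (fun k => / A k) (seq (length ts + a) s)).
  { induction s as [|s IH]; intros a; simpl; auto. rewrite IH. do 3 f_equal. lia. }
  intros s. rewrite H. do 2 f_equal. lia.
Qed.

Lemma block_factors_snoc ts0 p :
  block_factors (ts0 ++ [p]) = block_factors ts0 * block_factor (ts0 ++ [p]) p.
Proof.
  unfold block_factors. rewrite length_app. simpl length.
  rewrite Nat.add_1_r, seq_S, map_app, prodR_app. f_equal.
  - f_equal. apply map_ext_in. intros j Hj. apply in_seq in Hj.
    rewrite firstn_app. replace (j - length ts0)%nat with 0%nat by lia. simpl.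
    rewrite app_nil_r, app_nth1 by lia. reflexivity.
  - unfold prodR; cbn [map fold_right]. cbv zeta. rewrite Rmult_1_r. unfold block_factor.
    rewrite firstn_all2 by (rewrite length_app; simpl; lia).
    replace (1 + length ts0 - 1)%nat with (length ts0) by lia.
    rewrite nth_middle, length_app, Nat.add_1_r. reflexivity.
Qed.

Lemma service_factors_S_r a s : service_factors a (S s) = service_factors a s * / A (a + s)%nat.
Proof. unfold service_factors. rewrite seq_S, map_app, prodR_app. simpl. ring. Qed.

Lemma service_factors_S_l a s : service_factors a (S s) = / A a * service_factors (S a) s.
Proof. reflexivity. Qed.

Lemma weight_new_token ts0 T :
  LamP lam (ts0 ++ [(T, 0%nat)]) <> 0 -> INR (Fcount nS compat (ts0 ++ [(T, 0%nat)])) <> 0 ->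
  weight nS lam A compat (ts0 ++ [(T, 0%nat)]) =
  weight nS lam A compat ts0 *
  (lam T / (A (S (tsize ts0)) * INR (Fcount nS compat (ts0 ++ [(T, 0%nat)])))).
Proof.
  intros HL HF0.
  rewrite !weight_split, block_factors_snoc, nonholders_app, nonholders_single, tsize_nonholders.
  unfold block_factor. rewrite length_app. simpl. rewrite !Nat.add_0_r, !Nat.add_1_r.
  set (i := length ts0). set (n := nonholders ts0).
  assert (0 < A (S i)) by (apply hA; lia).
  assert (0 < A (S (i + n))) by (apply hA; lia).
  assert (E : service_factors (S (S i)) n = A (S i) * service_factors (S i) n * / A (S (i + n))).
  { assert (E1 := service_factors_S_l (S i) n). rewrite service_factors_S_r in E1.
    replace (S i + n)%nat with (S (i + n)) in E1 by lia.
    apply (Rmult_eq_reg_l (/ A (S i))); [|apply Rinv_neq_0_compat; lra].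
    rewrite <- E1. field. lra. }
  rewrite E. field. repeat split; lra.
Qed.

Lemma weight_old_token ts0 T k :
  LamP lam (ts0 ++ [(T, k)]) <> 0 -> INR (Fcount nS compat (ts0 ++ [(T, k)])) <> 0 ->
  weight nS lam A compat (ts0 ++ [(T, S k)]) =
  weight nS lam A compat (ts0 ++ [(T, k)]) *
  (LamP lam (ts0 ++ [(T, k)]) /
   (A (S (tsize (ts0 ++ [(T, k)]))) * INR (Fcount nS compat (ts0 ++ [(T, k)])))).
Proof.
  intros HL HF0.
  rewrite !weight_split, !block_factors_snoc, !nonholders_app, !nonholders_single, !length_app.
  rewrite tsize_nonholders, length_app, nonholders_app, nonholders_single.
  assert (Htok : map fst (ts0 ++ [(T, S k)]) = map fst (ts0 ++ [(T, k)]))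
    by (rewrite !map_app; reflexivity).
  unfold block_factor. rewrite (LamP_tokens lam _ _ Htok), (Fcount_tokens nS compat _ _ Htok).
  rewrite !length_app. simpl length.
  replace (nonholders ts0 + S k)%nat with (S (nonholders ts0 + k)) by lia.
  rewrite service_factors_S_r. cbn [fst snd pow].
  replace (S (length ts0 + 1) + (nonholders ts0 + k))%nat
    with (S (length ts0 + 1 + (nonholders ts0 + k))) by lia.
  assert (0 < A (S (length ts0 + 1 + (nonholders ts0 + k)))) by (apply hA; lia).
  assert (0 < A (length ts0 + 1)%nat) by (apply hA; lia).
  field. repeat split; auto; lra.
Qed.

(** * Lumping mu onto token states *)

Lemma valid_token_last ts0 T n :
  valid_token K (ts0 ++ [(T, n)]) -> (T < K)%nat /\ ~ In T (map fst ts0).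
Proof.
  intros [Hnd Hf]. rewrite map_app in Hnd, Hf. simpl in Hnd, Hf.
  apply Forall_app in Hf as [_ HT]. inversion HT; subst. split; auto.
  intros Hin. apply NoDup_remove_2 in Hnd. rewrite app_nil_r in Hnd. auto.
Qed.

Lemma LamP_snoc_pos ts0 p : valid_token K (ts0 ++ [p]) -> 0 < LamP lam (ts0 ++ [p]).
Proof.
  intros [_ Hf]. unfold LamP. rewrite map_app, sumR_app. rewrite map_app in Hf.
  apply Forall_app in Hf as [Hf0 Hp]. inversion Hp; subst. simpl.
  assert (0 <= sumR (map (fun q => lam (fst q)) ts0)).
  { apply sumR_nonneg. intros q Hq. left. apply hlam.
    rewrite Forall_forall in Hf0. apply Hf0, in_map; auto. }
  pose proof (hlam (fst p) ltac:(auto)). lra.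
Qed.

Lemma Fcount_snoc_pos ts0 p : valid_token K (ts0 ++ [p]) -> 0 < INR (Fcount nS compat (ts0 ++ [p])).
Proof.
  intros [_ Hf]. rewrite map_app in Hf. apply Forall_app in Hf as [_ Hp]. inversion Hp; subst.
  destruct (hF _ H1) as [s [Hs Hc]]. apply lt_0_INR. unfold Fcount.
  assert (Hin : In s (filter (fun s0 => existsb (fun q => compat s0 (fst q)) (ts0 ++ [p]))
                        (seq 0 nS))).
  { apply filter_In. split; [apply in_seq; lia|]. apply existsb_exists. exists p.
    split; auto. apply in_app_iff; simpl; auto. }
  destruct (filter _ _); [contradiction | simpl; lia].
Qed.

Lemma token_marginal_snoc (f : list nat -> R) ts N : tsize ts = S N ->
  token_marginal K f ts =
  sumR (map (fun x => sumR (map (fun c =>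
    if tok_dec (token_step (token_state x) c) ts then f (x ++ [c]) else 0) (seq 0 K)))
    (states K N)).
Proof.
  intros H. unfold token_marginal. rewrite H, sum_states_S. apply sumR_ext. intros x _.
  apply sumR_ext. intros c _. rewrite token_state_snoc. reflexivity.
Qed.

(* The newest customer is the holder of a new token T. *)
Lemma marginal_new_token ts0 T : valid_token K (ts0 ++ [(T, 0%nat)]) ->
  token_marginal K mu (ts0 ++ [(T, 0%nat)]) =
  token_marginal K mu ts0 *
  (lam T / (A (S (tsize ts0)) * INR (Fcount nS compat (ts0 ++ [(T, 0%nat)])))).
Proof.
  intros Hv. destruct (valid_token_last _ _ _ Hv) as [HT Hfresh].
  rewrite (token_marginal_snoc _ _ (tsize ts0))
    by (rewrite tsize_snoc; lia).
  unfold token_marginal. rewrite <- sumR_scalr. apply sumR_ext. intros x Hx.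
  apply states_in in Hx as [Hl Hvx].
  destruct (tok_dec (token_state x) ts0) as [E|E].
  - transitivity (mu (x ++ [T])).
    + rewrite <- (sumR_seq_indicator K T (fun c => mu (x ++ [c]))) by auto.
      apply sumR_ext. intros c _. rewrite E.
      destruct tok_dec as [E1|E1]; destruct Nat.eq_dec as [E2|E2]; auto.
      * apply token_step_new_iff in E1. tauto.
      * exfalso. apply E1, token_step_new_iff. subst. auto.
    + rewrite mu_snoc, Fl_token_state, token_state_snoc, E, token_step_fresh, Hl by auto.
      reflexivity.
  - rewrite Rmult_0_l. apply sumR_zero. intros c _.
    destruct tok_dec as [E1|]; auto. apply token_step_new_iff in E1. tauto.
Qed.

(* The newest customer joins the last block (T, k), whatever its type among
   the current tokens. *)
Lemma marginal_old_token ts0 T k : valid_token K (ts0 ++ [(T, S k)]) ->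
  token_marginal K mu (ts0 ++ [(T, S k)]) =
  token_marginal K mu (ts0 ++ [(T, k)]) *
  (LamP lam (ts0 ++ [(T, k)]) /
   (A (S (tsize (ts0 ++ [(T, k)]))) * INR (Fcount nS compat (ts0 ++ [(T, k)])))).
Proof.
  intros Hv. set (ts1 := ts0 ++ [(T, k)]).
  assert (Htok : map fst (ts0 ++ [(T, S k)]) = map fst ts1)
    by (unfold ts1; rewrite !map_app; reflexivity).
  assert (Hv1 : valid_token K ts1) by (destruct Hv as [H1 H2]; rewrite Htok in H1, H2; split; auto).
  rewrite (token_marginal_snoc _ _ (tsize ts1))
    by (unfold ts1; rewrite !tsize_snoc; lia).
  unfold token_marginal. rewrite <- sumR_scalr. apply sumR_ext. intros x Hx.
  apply states_in in Hx as [Hl Hvx].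
  destruct (tok_dec (token_state x) ts1) as [E|E].
  - rewrite E, <- (sumR_tokens K lam ts1 Hv1).
    set (D := A (S (tsize ts1)) * INR (Fcount nS compat ts1)).
    transitivity (sumR (map (fun c => mu x / D *
      (if in_dec Nat.eq_dec c (map fst ts1) then lam c else 0)) (seq 0 K)));
      [| rewrite sumR_scal; unfold Rdiv; ring].
    apply sumR_ext. intros c _.
    destruct tok_dec as [E1|E1]; destruct in_dec as [E2|E2].
    + rewrite mu_snoc, Fl_token_state, token_state_snoc, E, E1, Hl,
        (Fcount_tokens nS compat _ _ Htok). unfold D, Rdiv. ring.
    + apply token_step_old_iff in E1. tauto.
    + exfalso. apply E1, token_step_old_iff. auto.
    + ring.
  - rewrite Rmult_0_l. apply sumR_zero. intros c _.
    destruct tok_dec as [E1|]; auto. apply token_step_old_iff in E1. tauto.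
Qed.

Lemma token_marginal_mu ts : valid_token K ts -> token_marginal K mu ts = weight nS lam A compat ts.
Proof.
  remember (tsize ts) as N eqn:HN. revert ts HN.
  induction N as [|N IH]; intros ts HN Hv.
  - destruct ts; [|discriminate]. unfold token_marginal, weight. simpl. rewrite mu_nil. ring.
  - destruct (snoc_cases ts) as [->|[ts0 [[T [|k]] ->]]]; [discriminate| |].
    + rewrite marginal_new_token, weight_new_token, (IH ts0); auto.
      * rewrite tsize_snoc in HN. lia.
      * apply (valid_token_prefix K _ _ Hv).
      * pose proof (LamP_snoc_pos _ _ Hv). lra.
      * pose proof (Fcount_snoc_pos _ _ Hv). lra.
    + assert (Htok : map fst (ts0 ++ [(T, S k)]) = map fst (ts0 ++ [(T, k)]))
        by (rewrite !map_app; reflexivity).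
      assert (Hv1 : valid_token K (ts0 ++ [(T, k)]))
        by (destruct Hv as [H1 H2]; rewrite Htok in H1, H2; split; auto).
      rewrite marginal_old_token, weight_old_token, (IH (ts0 ++ [(T, k)])); auto.
      * rewrite !tsize_snoc in *. lia.
      * pose proof (LamP_snoc_pos _ _ Hv1). lra.
      * pose proof (Fcount_snoc_pos _ _ Hv1). lra.
Qed.

Lemma level_mass_mu N :
  sumR (map mu (states K N)) = sumR (map (weight nS lam A compat) (tstates K N)).
Proof.
  transitivity (sumR (map (fun x => sumR (map (fun ts =>
       if tok_dec (token_state x) ts then mu x else 0) (tstates K N))) (states K N))).
  - apply sumR_ext. intros x Hx. symmetry. rewrite (sumR_single _ _ (token_state x)).
    + destruct tok_dec; congruence.
    + apply NoDup_nodup.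
    + apply nodup_In, in_map. auto.
    + intros ts _ Hne. destruct tok_dec; congruence.
  - rewrite sumR_swap. apply sumR_ext. intros ts Hts.
    apply nodup_In, in_map_iff in Hts as [x0 [<- Hx0]].
    apply states_in in Hx0 as [Hl Hv].
    rewrite <- token_marginal_mu by (apply token_state_valid; auto).
    unfold token_marginal. rewrite tsize_token_state, Hl. reflexivity.
Qed.

Lemma token_marginal_nil (f : list nat -> R) : token_marginal K f [] = f [].
Proof. unfold token_marginal. simpl. ring. Qed.

Lemma mu_total_mass Z :
  infinite_sum (fun N => sumR (map (weight nS lam A compat) (tstates K N))) Z ->
  infinite_sum (fun N => sumR (map mu (states K N))) Z.
Proof. apply infinite_sum_ext. intros N. symmetry. apply level_mass_mu. Qed.

Lemma total_mass_ge_1 Z : infinite_sum (fun N => sumR (map mu (states K N))) Z -> 1 <= Z.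
Proof.
  intros HZ. assert (H0 := sum_incr _ 0 Z HZ). simpl in H0. rewrite mu_nil, Rplus_0_r in H0.
  apply H0. intros N. apply sumR_nonneg. intros x Hx. left. apply mu_pos.
  apply states_in in Hx; tauto.
Qed.

Lemma normalised_mu_stationary Z : infinite_sum (fun N => sumR (map mu (states K N))) Z ->
  stationary K nS lam A compat (fun x => mu x / Z).
Proof.
  intros HZ. pose proof (total_mass_ge_1 Z HZ). split; [|split].
  - intros x Hx. apply Rmult_le_pos; [left; apply mu_pos; auto | left; apply Rinv_0_lt_compat; lra].
  - replace 1 with (/ Z * Z) by (field; lra).
    apply (infinite_sum_ext (fun N => / Z * sumR (map mu (states K N)))).
    + intros N. rewrite <- sumR_scal. apply sumR_ext. intros; unfold Rdiv; ring.
    + apply infinite_sum_scal; auto.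
  - intros x Hx.
    rewrite (sumR_ext (fun y => mu y / Z * rate K nS lam A compat y x)
               (fun y => / Z * (mu y * rate K nS lam A compat y x))) by (intros; unfold Rdiv; ring).
    rewrite sumR_scal, <- mu_balance, out_rate_eq by auto. unfold Rdiv. ring.
Qed.

Lemma stationary_normalisation pi Z : stationary K nS lam A compat pi ->
  infinite_sum (fun N => sumR (map mu (states K N))) Z -> pi [] * Z = 1.
Proof.
  intros Hst HZ. pose proof Hst as [_ [Hsum _]].
  apply (uniqueness_sum (fun N => sumR (map pi (states K N)))); auto.
  apply (infinite_sum_ext (fun N => pi [] * sumR (map mu (states K N)))).
  - intros N. rewrite <- sumR_scal. apply sumR_ext. intros x Hx.
    symmetry. apply stationary_product_form; auto. apply states_in in Hx; tauto.
  - apply infinite_sum_scal; auto.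
Qed.

Lemma stationary_token_marginal pi ts : stationary K nS lam A compat pi ->
  valid_token K ts -> token_marginal K pi ts = pi [] * weight nS lam A compat ts.
Proof.
  intros Hst Hv. rewrite <- token_marginal_mu by auto.
  unfold token_marginal. rewrite <- sumR_scal. apply sumR_ext. intros x Hx.
  apply states_in in Hx as [_ Hvx].
  destruct tok_dec; [apply stationary_product_form; auto | ring].
Qed.

End Model.

Theorem mainTheorem12 (K nS : nat) (lam A : nat -> R)
  (compat : nat -> nat -> bool)
  (hlam : forall c, (c < K)%nat -> 0 < lam c)
  (hA : forall n, (1 <= n)%nat -> 0 < A n)
  (hF : forall c, (c < K)%nat -> exists s, (s < nS)%nat /\ compat s c = true)
  (Z : R)
  (hZ : infinite_sum
          (fun N => sumR (map (weight nS lam A compat) (tstates K N))) Z) :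
  (exists pi, stationary K nS lam A compat pi) /\
  (forall pi, stationary K nS lam A compat pi ->
     token_marginal K pi [] * Z = 1 /\
     (forall ts, valid_token K ts ->
        token_marginal K pi ts =
        token_marginal K pi [] * weight nS lam A compat ts)).
Proof.
  pose proof (mu_total_mass K nS lam A compat hlam hA hF Z hZ) as Hmass.
  split.
  - exists (fun x => mu nS lam A compat x / Z).
    exact (normalised_mu_stationary K nS lam A compat hlam hA hF Z Hmass).
  - intros pi Hst. rewrite token_marginal_nil. split.
    + exact (stationary_normalisation K nS lam A compat hlam hA hF pi Z Hst Hmass).
    + intros ts Hv. exact (stationary_token_marginal K nS lam A compat hlam hA hF pi ts Hst Hv).
Qed.
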